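(* Let $(X,\pi)$ be a finite symmetric two-player game with relative payoff game $(X,\Delta)$. Imitation is subject to a money pump in $(X,\pi)$ if and only if $(X,\Delta)$ is a generalized rock-paper-scissors game.
   Context: A symmetric two-player game $(X,\pi)$: both players have action set $X$ and a bounded payoff function $\pi:X\times X\to\mathbb{R}$, where $\pi(x,y)$ is the payoff of the player choosing $x$ against an opponent choosing $y$. The relative payoff function is $\Delta(x,y)=\pi(x,y)-\pi(y,x)$ and $(X,\Delta)$ is the relative payoff game (a symmetric zero-sum game, $\Delta(x,y)=-\Delta(y,x)$). Imitate-the-best: given an initial action $y_0\in X$ of the imitator and any sequence $(x_t)_{t\ge 0}$ of actions of the opponent, the imitator plays $y_t=x_{t-1}$ if $\Delta(x_{t-1},y_{t-1})>0$ and $y_t=y_{t-1}$ otherwise. Imitation is not subject to a money pump if there exists $M\in\mathbb{R}_+$ such that for every $y_0\in X$ and every sequence $(x_t)_{t\ge0}$ in $X$, $\limsup_{T\to\infty}\sum_{t=0}^{T}\Delta(x_t,y_t)\le M$; otherwise imitation is subject to a money pump. A symmetric zero-sum game $(Y,\Delta)$ (i.e. $\Delta(x,y)=-\Delta(y,x)$) is a generalized rock-paper-scissors matrix if for every $y\in Y$ there is $x\in Y$ with $\Delta(x,y)>0$. A symmetric zero-sum game $(X,\Delta)$ is a generalized rock-paper-scissors game if there is a nonempty subset $\bar X\subseteq X$ such that the restriction $(\bar X,\Delta|_{\bar X\times\bar X})$ is a generalized rock-paper-scissors matrix. *)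

From HB Require Import structures.
From mathcomp Require Import all_boot all_order all_algebra.
From mathcomp Require Import all_classical all_reals all_analysis.
Set Implicit Arguments. Unset Strict Implicit. Unset Printing Implicit Defensive.
Import Order.TTheory GRing.Theory Num.Theory.
Local Open Scope ring_scope.

(* A symmetric two-player game with action set X and payoff pi : X -> X -> R;
   pi x y is the payoff of the player choosing x against an opponent choosing y. *)

Definition relpay (R : realType) (X : Type) (pi : X -> X -> R) (x y : X) : R :=
  pi x y - pi y x.

(* Imitate-the-best: imitator's action at time t, given y0 and opponent's
   sequence xs. y_{t+1} = x_t if Delta(x_t, y_t) > 0, else y_t. *)
Fixpoint imitate (R : realType) (X : Type) (Delta : X -> X -> R)
    (y0 : X) (xs : nat -> X) (t : nat) : X :=
  match t with
  | 0%N => y0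
  | t'.+1 => let y := imitate Delta y0 xs t' in
             if 0 < Delta (xs t') y then xs t' else y
  end.

Definition cum_relpay (R : realType) (X : Type) (Delta : X -> X -> R)
    (y0 : X) (xs : nat -> X) (T : nat) : R :=
  \sum_(0 <= t < T.+1) Delta (xs t) (imitate Delta y0 xs t).

Definition no_money_pump (R : realType) (X : Type) (pi : X -> X -> R) : Prop :=
  exists M : R, 0 <= M /\
    forall (y0 : X) (xs : nat -> X),
      (limn_esup (fun T => (cum_relpay (relpay pi) y0 xs T)%:E) <= M%:E)%E.

Definition money_pump (R : realType) (X : Type) (pi : X -> X -> R) : Prop :=
  ~ no_money_pump pi.

Definition gRPS_matrix (R : realType) (X : Type) (Delta : X -> X -> R)
    (Y : set X) : Prop :=
  forall y, Y y -> exists2 x, Y x & 0 < Delta x y.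

Definition gRPS_game (R : realType) (X : Type) (Delta : X -> X -> R) : Prop :=
  exists Y : set X, (Y !=set0)%classic /\ gRPS_matrix Delta Y.

(* If some nonempty Y has every element beaten within Y, the opponent can pick
   a beating reply in Y each round; the imitator always copies it, so it loses
   at least the smallest positive relative payoff every round.  Otherwise the
   improvement relation "x beats y" is acyclic, so the number of actions
   reachable from y by improvements strictly decreases whenever the imitator
   switches; the imitator loses at most max Delta per switch and never loses
   when it does not switch, which bounds the cumulative loss by
   |X| * max Delta. *)

From HB Require Import structures.
From mathcomp Require Import all_boot all_order all_algebra.
From mathcomp Require Import all_classical all_reals all_analysis.
From mathcomp Require Import lra.
Set Implicit Arguments. Unset Strict Implicit. Unset Printing Implicit Defensive.
Import Order.TTheory GRing.Theory Num.Theory.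
Local Open Scope classical_set_scope.
Local Open Scope ring_scope.

Section FiniteBounds.
Variables (R : realType) (X : finType) (g : X -> R).

Lemma finite_ubound : exists2 B, 0 <= B & forall x, g x <= B.
Proof.
exists (\big[Num.max/0]_x g x); first exact: bigmax_ge_id.
by move=> x; apply: le_bigmax.
Qed.

Lemma finite_pos_lbound : exists2 d, 0 < d & forall x, 0 < g x -> d <= g x.
Proof.
exists (\big[Num.min/1]_(x | 0 < g x) g x); last by move=> x; apply: bigmin_le_cond.
by apply/bigmin_gtP; split.
Qed.

End FiniteBounds.

Lemma cvgry_linear_lbound (R : realType) (u : nat -> R) (d : R) :
  0 < d -> (forall n, n%:R * d <= u n) -> u @ \oo --> +oo.
Proof.
move=> d0 ud; apply/cvgryPge => A.
have /cvgryPge/(_ (A / d)) := @cvgr_idn R.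
by apply: filterS => n; rewrite ler_pdivrMr // => /le_trans; apply.
Qed.

Lemma limn_esup_le_EFin (R : realType) (u : nat -> R) (M : R) :
  (forall n, u n <= M) -> (limn_esup (fun n => (u n)%:E) <= M%:E)%E.
Proof.
move=> uM; rewrite limn_esup_lim; apply: lime_le; first exact: is_cvg_esups.
by apply: nearW => n; apply: ge_ereal_sup => _ [k _ <-]; rewrite lee_fin.
Qed.

Lemma imitate_iter (R : realType) (X : Type) (D : X -> X -> R)
    (f : X -> X) (y0 : X) :
  (forall t, 0 < D (f (iter t f y0)) (iter t f y0)) ->
  forall t, imitate D y0 (fun t => f (iter t f y0)) t = iter t f y0.
Proof. by move=> fD; elim=> [|t IH] //=; rewrite IH fD. Qed.

Lemma gRPS_matrix_beating_map (R : realType) (X : Type) (D : X -> X -> R)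
    (Y : set X) :
  gRPS_matrix D Y -> exists f : X -> X, forall y, Y y -> Y (f y) /\ 0 < D (f y) y.
Proof.
move=> YD.
have [y|f Yf] := @choice _ _ (fun y x => Y y -> Y x /\ 0 < D x y); last by exists f.
have [Yy|nYy] := pselect (Y y); last by exists y.
by have [x Yx Dxy] := YD y Yy; exists x.
Qed.

Lemma gRPS_cum_relpay_cvgy (R : realType) (X : finType) (D : X -> X -> R) :
  gRPS_game D -> exists y0 xs, cum_relpay D y0 xs @ \oo --> +oo.
Proof.
move=> [Y [[y0 Yy0] /gRPS_matrix_beating_map[f Yf]]].
have Yiter t : Y (iter t f y0) by elim: t => [|t IH] //=; exact: (Yf _ IH).1.
have fD t : 0 < D (f (iter t f y0)) (iter t f y0) by exact: (Yf _ (Yiter t)).2.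
pose xs t := f (iter t f y0).
have xs_wins t : 0 < D (xs t) (imitate D y0 xs t).
  by rewrite imitate_iter; apply: fD.
have [d d0 Dd] := finite_pos_lbound (fun p : X * X => D p.1 p.2).
exists y0, xs; apply: (cvgry_linear_lbound d0) => n.
apply: le_trans (ler_sum _ (fun t _ => Dd (_, _) (xs_wins t))).
by rewrite sumr_const_nat subn0 mulr_natl ler_pMn2l.
Qed.

Lemma money_pump_of_cvgy (R : realType) (X : Type) (pi : X -> X -> R)
    (y0 : X) (xs : nat -> X) :
  cum_relpay (relpay pi) y0 xs @ \oo --> +oo -> money_pump pi.
Proof.
move=> /cvgeryP/cvg_limn_einf_sup[_ supE] [M [_ /(_ y0 xs)]].
by rewrite supE leNgt ltey.
Qed.

Section PotentialBound.
Variables (R : realType) (X : Type) (D : X -> X -> R) (B : R) (phi : X -> nat).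
Hypotheses (B_ge0 : 0 <= B) (D_le : forall x y, D x y <= B)
  (phi_lt : forall x y, 0 < D x y -> (phi x < phi y)%N).

Lemma sum_imitate_le_potential y0 xs n :
  \sum_(0 <= t < n) D (xs t) (imitate D y0 xs t) <=
    B * (phi y0)%:R - B * (phi (imitate D y0 xs n))%:R.
Proof.
elim: n => [|n IH]; first by rewrite big_geq // subrr.
rewrite big_nat_recr //=; set y := imitate D y0 xs n.
have := D_le (xs n) y; case: ifPn => [Dpos|]; last first.
  by rewrite -leNgt => Dle0 _; lra.
have : B * (phi (xs n)).+1%:R <= B * (phi y)%:R.
  by rewrite ler_wpM2l // ler_nat phi_lt.
rewrite -addn1 natrD mulrDr mulr1; lra.
Qed.

End PotentialBound.

Lemma no_money_pump_of_potential (R : realType) (X : Type) (pi : X -> X -> R)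
    (B : R) (phi : X -> nat) (N : nat) :
  0 <= B -> (forall x y, relpay pi x y <= B) ->
  (forall x y, 0 < relpay pi x y -> (phi x < phi y)%N) ->
  (forall x, (phi x <= N)%N) -> no_money_pump pi.
Proof.
move=> B_ge0 D_le phi_lt phi_le; exists (B * N%:R); split.
  by rewrite mulr_ge0.
move=> y0 xs; apply: limn_esup_le_EFin => T.
apply: le_trans (sum_imitate_le_potential B_ge0 D_le phi_lt y0 xs T.+1) _.
have : B * (phi y0)%:R <= B * N%:R by rewrite ler_wpM2l // ler_nat.
have : 0 <= B * (phi (imitate (relpay pi) y0 xs T.+1))%:R by rewrite mulr_ge0.
lra.
Qed.

Section ImprovementRank.
Variables (R : realType) (X : finType) (D : X -> X -> R).
Hypothesis not_gRPS : ~ gRPS_game D.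

Definition improvement : rel X := fun y x => 0 < D x y.

Lemma improvement_acyclic x y : 0 < D x y -> ~~ connect improvement x y.
Proof.
move=> Dxy; apply/negP => cxy; apply: not_gRPS.
(* y lies on an improvement cycle, so its strongly connected component is a
   generalized rock-paper-scissors matrix. *)
exists (fun z => connect improvement y z && connect improvement z y); split.
  by exists y; rewrite /= connect0.
move=> z /= /andP[cyz czy].
have [->|nzy] := eqVneq z y.
  by exists x => //=; rewrite cxy andbT connect1.
case/connectP: czy => [[|w p]] /=; first by move=> _ zy; rewrite zy eqxx in nzy.
move=> /andP[zw pw] py; exists w => //=.
by rewrite (connect_trans cyz (connect1 zw)) /=; apply/connectP; exists p.
Qed.

Definition improvement_rank y := #|[pred x | connect improvement y x]|.

Lemma improvement_rank_lt x y :
  0 < D x y -> (improvement_rank x < improvement_rank y)%N.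
Proof.
move=> Dxy; apply/proper_card/properP; split.
  by apply/fintype.subsetP => z; rewrite !inE; apply/connect_trans/connect1.
by exists y; rewrite !inE ?connect0 // improvement_acyclic.
Qed.

End ImprovementRank.

Theorem theorem1 (R : realType) (X : finType) (pi : X -> X -> R) :
  money_pump pi <-> gRPS_game (relpay pi).
Proof.
split=> [pump|/gRPS_cum_relpay_cvgy[y0 [xs]]]; last exact: money_pump_of_cvgy.
apply: contrapT => not_gRPS; apply: pump.
have [B B_ge0 D_le] := finite_ubound (fun p : X * X => relpay pi p.1 p.2).
apply: (no_money_pump_of_potential B_ge0 (fun x y => D_le (x, y))
  (improvement_rank_lt not_gRPS)).
by move=> x; apply: max_card.
Qed.
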